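(* Let $\mathbb{C}$ be a locally small category and $\mathbb{C}_{\mathit{fin}}$ a full subcategory satisfying (C1)–(C5) below. Let $U:\mathbb{C}^*\to\mathbb{C}$ be a reasonable precompact expansion with unique restrictions, and let $F\in\mathrm{Ob}(\mathbb{C})$ be a locally finite object. Then $$\mathrm{Aut}(F)\times U^{-1}(F)\to U^{-1}(F):(g,\mathcal{F})\mapsto\mathcal{F}^g$$ is a continuous group action with respect to the topologies $\tau_F$ on $\mathrm{Aut}(F)$ and $\sigma_F$ on $U^{-1}(F)$.
   Context: Write $A\to B$ if $\hom(A,B)\ne\varnothing$. Conditions: (C1) all morphisms of $\mathbb{C}$ are monomorphisms; (C2) $\mathrm{Ob}(\mathbb{C}_{\mathit{fin}})$ is a set; (C3) $\hom(A,B)$ is finite for $A,B\in\mathrm{Ob}(\mathbb{C}_{\mathit{fin}})$; (C4) for every $F\in\mathrm{Ob}(\mathbb{C})$ there is $A\in\mathrm{Ob}(\mathbb{C}_{\mathit{fin}})$ with $A\to F$; (C5) for every $B\in\mathrm{Ob}(\mathbb{C}_{\mathit{fin}})$ the set $\{A\in\mathrm{Ob}(\mathbb{C}_{\mathit{fin}}):A\to B\}$ is finite. $F$ is locally finite if for all $A,B\in\mathrm{Ob}(\mathbb{C}_{\mathit{fin}})$, $e\in\hom(A,F)$, $f\in\hom(B,F)$ there exist $D\in\mathrm{Ob}(\mathbb{C}_{\mathit{fin}})$, $r\in\hom(D,F)$, $p\in\hom(A,D)$, $q\in\hom(B,D)$ with $r\cdot p=e$, $r\cdot q=f$, such that for every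 $H\in\mathrm{Ob}(\mathbb{C})$, $r'\in\hom(H,F)$, $p'\in\hom(A,H)$, $q'\in\hom(B,H)$ with $r'\cdot p'=e$, $r'\cdot q'=f$ there is $s\in\hom(D,H)$ with $r'\cdot s=r$, $s\cdot p=p'$, $s\cdot q=q'$. An expansion of $\mathbb{C}$ is a locally small category $\mathbb{C}^*$ with a functor $U:\mathbb{C}^*\to\mathbb{C}$ surjective on objects and injective on hom-sets; we regard $\hom_{\mathbb{C}^*}(\mathcal{A},\mathcal{B})\subseteq\hom_{\mathbb{C}}(U\mathcal{A},U\mathcal{B})$, and $U^{-1}(A)=\{\mathcal{A}:U(\mathcal{A})=A\}$. $U$ is reasonable if for every $e\in\hom(A,B)$ and $\mathcal{A}\in U^{-1}(A)$ there is $\mathcal{B}\in U^{-1}(B)$ with $e\in\hom(\mathcal{A},\mathcal{B})$; it has unique restrictions if for every $\mathcal{B}$ and $e\in\hom(A,U(\mathcal{B}))$ there is exactly one $\mathcal{A}\in U^{-1}(A)$ with $e\in\hom(\mathcal{A},\mathcal{B})$; it is precompact if $U^{-1}(A)$ is a set for every $A$ and finite for $A\in\mathrm{Ob}(\mathbb{C}_{\mathit{fin}})$. For $g\in\mathrm{Aut}(F)$ and $\mathcal{F}\in U^{-1}(F)$, $\mathcal{F}^g$ denotes the unique $\mathcal{F}'\in U^{-1}(F)$ with $g^{-1}\in\hom(\mathcal{F},\mathcal{F}')$ (for a reasonable expansion with unique restrictions such an element exists and is unique). $\tau_F$ is the topology on $\mathrm{Aut}(F)$ generated by the sets $\{f\in\mathrm{Aut}(F):f\cdot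 e_1=e_2\}$, $A\in\mathrm{Ob}(\mathbb{C}_{\mathit{fin}})$, $e_1,e_2\in\hom(A,F)$. $\sigma_F$ is the topology on $U^{-1}(F)$ generated by the sets $N(e,\mathcal{A})=\{\mathcal{F}\in U^{-1}(F):e\in\hom(\mathcal{A},\mathcal{F})\}$ for $\mathcal{A}\in\mathrm{Ob}(\mathbb{C}^* )$ with $U(\mathcal{A})\in\mathrm{Ob}(\mathbb{C}_{\mathit{fin}})$ and $e\in\hom(U(\mathcal{A}),F)$. *)

From Stdlib Require Import List.
Import ListNotations.

Set Implicit Arguments.
Unset Strict Implicit.

(* comp g f is g . f ("g after f"), matching the paper's r . p notation. *)
Record Category := {
  Ob :> Type;
  hom : Ob -> Ob -> Type;
  idm : forall A, hom A A;
  comp : forall A B C, hom B C -> hom A B -> hom A C;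
  comp_assoc : forall A B C D (h : hom C D) (g : hom B C) (f : hom A B),
      comp h (comp g f) = comp (comp h g) f;
  comp_idl : forall A B (f : hom A B), comp (idm B) f = f;
  comp_idr : forall A B (f : hom A B), comp f (idm A) = f
}.
Arguments hom {c} A B.
Arguments idm {c} A.
Arguments comp {c A B C} g f.

(* A -> B  in the paper:  hom(A,B) nonempty *)
Definition arrow {C : Category} (A B : C) : Prop := inhabited (hom A B).

Definition is_mono {C : Category} {A B : C} (e : hom A B) : Prop :=
  forall X (f g : hom X A), comp e f = comp e g -> f = g.

Definition FiniteType (T : Type) : Prop := exists l : list T, forall x, In x l.

(* A full subcategory C_fin of C is given by a predicate on objects
   (hom-sets are those of C). Conditions (C1)-(C5). *)
Definition C1 (C : Category) : Prop :=
  forall (A B : C) (e : hom A B), is_mono e.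
(* (C2) "Ob(C_fin) is a set": no set/class distinction in type theory. *)
Definition C3 (C : Category) (fin : C -> Prop) : Prop :=
  forall A B : C, fin A -> fin B -> FiniteType (hom A B).
Definition C4 (C : Category) (fin : C -> Prop) : Prop :=
  forall F : C, exists A : C, fin A /\ arrow A F.
Definition C5 (C : Category) (fin : C -> Prop) : Prop :=
  forall B : C, fin B ->
    exists l : list (Ob C), forall A : C, fin A -> arrow A B -> In A l.

Definition locally_finite (C : Category) (fin : C -> Prop) (F : C) : Prop :=
  forall (A B : C), fin A -> fin B ->
  forall (e : hom A F) (f : hom B F),
  exists (D : C) (r : hom D F) (p : hom A D) (q : hom B D),
    fin D /\ comp r p = e /\ comp r q = f /\
    forall (H : C) (r' : hom H F) (p' : hom A H) (q' : hom B H),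
      comp r' p' = e -> comp r' q' = f ->
      exists s : hom D H, comp r' s = r /\ comp s p = p' /\ comp s q = q'.

(* An expansion U : C* -> C (surjective on objects, injective on hom-sets, with
   hom_{C*}(X,Y) regarded as a subset of hom_C(UX,UY)) is presented by its
   fibres  EOb A = U^{-1}(A)  and, for X in U^{-1}(A), Y in U^{-1}(B), the
   subset  { e : hom A B | Emor X Y e } = hom_{C*}(X,Y)  of hom_C(A,B),
   closed under identities and composition. *)
Record Expansion (C : Category) := {
  EOb : C -> Type;
  Emor : forall (A B : C), EOb A -> EOb B -> hom A B -> Prop;
  Emor_id : forall (A : C) (X : EOb A), Emor X X (idm A);
  Emor_comp : forall (A B D : C) (X : EOb A) (Y : EOb B) (Z : EOb D)
      (f : hom A B) (g : hom B D),
      Emor Y Z g -> Emor X Y f -> Emor X Z (comp g f);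
  EOb_surj : forall A : C, inhabited (EOb A)
}.
Arguments EOb {C} e A.
Arguments Emor {C} e {A B} X Y e0 : rename.

Definition reasonable (C : Category) (U : Expansion C) : Prop :=
  forall (A B : C) (e : hom A B) (X : EOb U A),
    exists Y : EOb U B, Emor U X Y e.

Definition unique_restrictions (C : Category) (U : Expansion C) : Prop :=
  forall (B : C) (Y : EOb U B) (A : C) (e : hom A B),
    exists! X : EOb U A, Emor U X Y e.

(* "U^{-1}(A) is a set" is automatic (EOb A is a type); finiteness on C_fin. *)
Definition precompact (C : Category) (fin : C -> Prop) (U : Expansion C)
  : Prop := forall A : C, fin A -> FiniteType (EOb U A).

Record Aut (C : Category) (F : C) := {
  aut_map : hom F F;
  aut_inv : hom F F;
  aut_l : comp aut_map aut_inv = idm F;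
  aut_r : comp aut_inv aut_map = idm F
}.
Arguments aut_map {C F} a.
Arguments aut_inv {C F} a.

Definition aut_one (C : Category) (F : C) : Aut F.
Proof.
  refine {| aut_map := idm F; aut_inv := idm F |}; apply comp_idl.
Defined.

Definition aut_mul (C : Category) (F : C) (g h : Aut F) : Aut F.
Proof.
  refine {| aut_map := comp (aut_map g) (aut_map h);
            aut_inv := comp (aut_inv h) (aut_inv g) |}.
  - rewrite <- comp_assoc, (comp_assoc (aut_map h)), aut_l, comp_idl. apply aut_l.
  - rewrite <- comp_assoc, (comp_assoc (aut_inv g)), aut_r, comp_idl. apply aut_r.
Defined.

(* Open sets of the topology generated by a family S of subsets (subbasis):
   every point of O lies in a finite intersection of members of S contained
   in O (the empty intersection being the whole space). *)
Definition gen_open {T : Type} (S : (T -> Prop) -> Prop) (O : T -> Prop)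
  : Prop :=
  forall x, O x ->
    exists l : list (T -> Prop),
      (forall B, In B l -> S B) /\ (forall B, In B l -> B x) /\
      (forall y, (forall B, In B l -> B y) -> O y).

Definition prod_open {T1 T2 : Type} (open1 : (T1 -> Prop) -> Prop)
  (open2 : (T2 -> Prop) -> Prop) (W : T1 * T2 -> Prop) : Prop :=
  forall p, W p -> exists (O1 : T1 -> Prop) (O2 : T2 -> Prop),
    open1 O1 /\ open2 O2 /\ O1 (fst p) /\ O2 (snd p) /\
    (forall x y, O1 x -> O2 y -> W (x, y)).

Definition continuous_map {T1 T2 : Type} (open1 : (T1 -> Prop) -> Prop)
  (open2 : (T2 -> Prop) -> Prop) (f : T1 -> T2) : Prop :=
  forall O, open2 O -> open1 (fun x => O (f x)).

Definition tau_subbasic (C : Category) (fin : C -> Prop) (F : C)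
  (S : Aut F -> Prop) : Prop :=
  exists (A : C) (e1 e2 : hom A F),
    fin A /\ forall f : Aut F, S f <-> comp (aut_map f) e1 = e2.

Definition tau_open (C : Category) (fin : C -> Prop) (F : C) :=
  gen_open (@tau_subbasic C fin F).

Definition sigma_subbasic (C : Category) (fin : C -> Prop) (U : Expansion C)
  (F : C) (S : EOb U F -> Prop) : Prop :=
  exists (A : C) (X : EOb U A) (e : hom A F),
    fin A /\ forall Y : EOb U F, S Y <-> Emor U X Y e.

Definition sigma_open (C : Category) (fin : C -> Prop) (U : Expansion C)
  (F : C) := gen_open (@sigma_subbasic C fin U F).

Definition is_exp_action (C : Category) (U : Expansion C) (F : C)
  (act : Aut F -> EOb U F -> EOb U F) : Prop :=
  forall (g : Aut F) (X : EOb U F), Emor U X (act g X) (aut_inv g).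

(* Exponential notation: a (right) group action, X^1 = X, X^(g h) = (X^g)^h. *)
Definition is_group_action (C : Category) (F : C) (T : Type)
  (act : Aut F -> T -> T) : Prop :=
  (forall X, act (aut_one F) X = X) /\
  (forall g h X, act (aut_mul g h) X = act h (act g X)).

Arguments tau_open {C} fin F _.
Arguments sigma_open {C} fin U F _.

(* Unique restrictions determine the source of a morphism of the expansion;
   for an invertible morphism they therefore also determine its target.  So
   the X' with g^-1 in hom(X, X') is unique, and g |-> (X |-> X^g) is a group
   action.  For continuity at (g, X): if X^g lies in N(e, Z), then X' in
   N(g e, Z) and f e = g e give X'^f in N(e, Z), so the subbasic rectangle
   {f | f e = g e} x N(g e, Z) around (g, X) lies in the preimage. *)

From Stdlib Require Import List ClassicalEpsilon.

Set Implicit Arguments.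
Unset Strict Implicit.

Definition list_inter {T : Type} (l : list (T -> Prop)) : T -> Prop :=
  fun x => forall B, In B l -> B x.

Lemma gen_open_list_inter {T : Type} (S : (T -> Prop) -> Prop)
    (l : list (T -> Prop)) :
  (forall B, In B l -> S B) -> gen_open S (list_inter l).
Proof. intros HS x Hx. exists l. repeat split; auto. Qed.

Section ProductSubbasis.
Variables (T1 T2 T3 : Type).
Variables (S1 : (T1 -> Prop) -> Prop) (S2 : (T2 -> Prop) -> Prop)
          (S3 : (T3 -> Prop) -> Prop).
Variable f : T1 * T2 -> T3.

Definition subbasic_rectangle_in (x : T1) (y : T2) (B : T3 -> Prop) : Prop :=
  exists B1 B2, S1 B1 /\ S2 B2 /\ B1 x /\ B2 y /\
    forall x' y', B1 x' -> B2 y' -> B (f (x', y')).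

Lemma list_inter_rectangle_in (x : T1) (y : T2) (l : list (T3 -> Prop)) :
  (forall B, In B l -> subbasic_rectangle_in x y B) ->
  exists l1 l2,
    (forall B, In B l1 -> S1 B) /\ list_inter l1 x /\
    (forall B, In B l2 -> S2 B) /\ list_inter l2 y /\
    forall x' y', list_inter l1 x' -> list_inter l2 y' ->
      list_inter l (f (x', y')).
Proof.
  induction l as [|B l IH]; intros Hl.
  - exists nil, nil. unfold list_inter; simpl; repeat split; tauto.
  - destruct (Hl B (or_introl eq_refl)) as [B1 [B2 [HB1 [HB2 [xB1 [yB2 HB]]]]]].
    destruct IH as [l1 [l2 [Hl1 [xl1 [Hl2 [yl2 Hf]]]]]].
    { intros B' HB'. apply Hl. now right. }
    exists (B1 :: l1), (B2 :: l2). unfold list_inter in *; simpl.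
    repeat split.
    + intros B' [<-|HB']; [exact HB1 | exact (Hl1 B' HB')].
    + intros B' [<-|HB']; [exact xB1 | exact (xl1 B' HB')].
    + intros B' [<-|HB']; [exact HB2 | exact (Hl2 B' HB')].
    + intros B' [<-|HB']; [exact yB2 | exact (yl2 B' HB')].
    + intros x' y' Hx' Hy' B' [<-|HB'].
      * apply HB; [apply Hx' | apply Hy']; now left.
      * apply (Hf x' y'); [| | exact HB'];
          intros B'' HB''; [apply Hx' | apply Hy']; now right.
Qed.

Lemma continuous_prod_of_subbasic_rectangles :
  (forall x y B, S3 B -> B (f (x, y)) -> subbasic_rectangle_in x y B) ->
  continuous_map (prod_open (gen_open S1) (gen_open S2)) (gen_open S3) f.
Proof.
  intros Hrect O HO [x y] Hxy.
  destruct (HO _ Hxy) as [l [Hl [xyl HlO]]].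
  destruct (list_inter_rectangle_in (fun B HB => Hrect x y B (Hl B HB) (xyl B HB)))
    as [l1 [l2 [Hl1 [xl1 [Hl2 [yl2 Hf]]]]]].
  exists (list_inter l1), (list_inter l2).
  repeat split.
  - exact (gen_open_list_inter Hl1).
  - exact (gen_open_list_inter Hl2).
  - exact xl1.
  - exact yl2.
  - intros x' y' Hx' Hy'. exact (HlO _ (Hf x' y' Hx' Hy')).
Qed.

End ProductSubbasis.

Lemma exp_action_exists (C : Category) (U : Expansion C) (F : C) :
  reasonable U -> exists act : Aut F -> EOb U F -> EOb U F, is_exp_action act.
Proof.
  intros HU.
  apply (choice (fun g a => forall X, Emor U X (a X) (aut_inv g))).
  intros g. apply (choice (fun X Y => Emor U X Y (aut_inv g))).
  intros X. apply HU.
Qed.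

Section UniqueRestrictions.
Variables (C : Category) (U : Expansion C).
Hypothesis UR : unique_restrictions U.

Lemma Emor_idm_eq (A : C) (X Y : EOb U A) : Emor U X Y (idm A) -> X = Y.
Proof.
  intros HXY. destruct (UR Y (idm A)) as [Z [_ HZ]].
  rewrite <- (HZ X HXY). apply HZ, Emor_id.
Qed.

Lemma Emor_sym_inv (A B : C) (k : hom A B) (k' : hom B A)
    (X : EOb U A) (Y : EOb U B) :
  comp k k' = idm B -> Emor U X Y k -> Emor U Y X k'.
Proof.
  intros Hkk' HXY. destruct (UR X k') as [Q [HQ _]].
  assert (HQY : Emor U Q Y (idm B)).
  { rewrite <- Hkk'. apply Emor_comp with (Y := X); assumption. }
  apply Emor_idm_eq in HQY. now subst Q.
Qed.

Lemma Emor_target_unique (A B : C) (k : hom A B) (k' : hom B A)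
    (X : EOb U A) (Y Y' : EOb U B) :
  comp k k' = idm B -> Emor U X Y k -> Emor U X Y' k -> Y = Y'.
Proof.
  intros Hkk' HXY HXY'. apply Emor_idm_eq. rewrite <- Hkk'.
  apply Emor_comp with (Y := X); [assumption|].
  apply (Emor_sym_inv Hkk' HXY).
Qed.

Variables (F : C) (act : Aut F -> EOb U F -> EOb U F).
Hypothesis Hact : is_exp_action act.

Lemma exp_action_one (X : EOb U F) : act (aut_one F) X = X.
Proof. symmetry. apply Emor_idm_eq, (Hact (aut_one F) X). Qed.

Lemma exp_action_mul (g h : Aut F) (X : EOb U F) :
  act (aut_mul g h) X = act h (act g X).
Proof.
  apply (Emor_target_unique (aut_r (aut_mul g h)) (Hact (aut_mul g h) X)).
  exact (Emor_comp (Hact h (act g X)) (Hact g X)).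
Qed.

Lemma exp_action_group : is_group_action act.
Proof. split; [exact exp_action_one | exact exp_action_mul]. Qed.

Lemma Emor_exp_action_map (g : Aut F) (X : EOb U F) :
  Emor U (act g X) X (aut_map g).
Proof. exact (Emor_sym_inv (aut_r g) (Hact g X)). Qed.

Lemma exp_action_in_N (A : C) (Z : EOb U A) (e : hom A F) (f g : Aut F)
    (Y : EOb U F) :
  comp (aut_map f) e = comp (aut_map g) e ->
  Emor U Z Y (comp (aut_map g) e) -> Emor U Z (act f Y) e.
Proof.
  intros Hfg HY. rewrite <- Hfg in HY.
  replace e with (comp (aut_inv f) (comp (aut_map f) e))
    by now rewrite comp_assoc, aut_r, comp_idl.
  exact (Emor_comp (Hact f Y) HY).
Qed.

Lemma exp_action_continuous (fin : C -> Prop) :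
  continuous_map (prod_open (tau_open fin F) (sigma_open fin U F))
    (sigma_open fin U F) (fun p : Aut F * EOb U F => act (fst p) (snd p)).
Proof.
  apply continuous_prod_of_subbasic_rectangles.
  intros g X B [A [Z [e [finA HB]]]] HgX. simpl in HgX.
  apply HB in HgX.
  exists (fun f : Aut F => comp (aut_map f) e = comp (aut_map g) e),
         (fun Y : EOb U F => Emor U Z Y (comp (aut_map g) e)).
  repeat split.
  - exists A, e, (comp (aut_map g) e). split; [exact finA | tauto].
  - exists A, Z, (comp (aut_map g) e). split; [exact finA | tauto].
  - exact (Emor_comp (Emor_exp_action_map g X) HgX).
  - intros f Y Hf HY. apply HB. exact (exp_action_in_N Hf HY).
Qed.

End UniqueRestrictions.

Theorem proposition5p9 :
  forall (C : Category) (fin : C -> Prop) (U : Expansion C) (F : C),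
    C1 C -> C3 fin -> C4 fin -> C5 fin ->
    reasonable U -> precompact fin U -> unique_restrictions U ->
    locally_finite fin F ->
    (exists act : Aut F -> EOb U F -> EOb U F, is_exp_action act) /\
    (forall act : Aut F -> EOb U F -> EOb U F,
        is_exp_action act ->
        is_group_action act /\
        continuous_map (prod_open (tau_open fin F) (sigma_open fin U F))
          (sigma_open fin U F)
          (fun p : Aut F * EOb U F => act (fst p) (snd p))).
Proof.
  intros C fin U F _ _ _ _ HU _ UR _. split.
  - exact (exp_action_exists F HU).
  - intros act Hact. split.
    + exact (exp_action_group UR Hact).
    + exact (exp_action_continuous (fin := fin) UR Hact).
Qed.
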